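(* Let $\mathcal X,\mathcal Y$ be complex Hilbert spaces and $A:\mathcal X\supset\operatorname{dom}A\to\mathcal Y$ a closed, densely defined linear operator with $\|Ax\|_{\mathcal Y}\ge c\|x\|_{\mathcal X}$ for some $c>0$ and all $x\in\operatorname{dom}A$. Let $\mathcal X_h$ be $\operatorname{dom}A$ with inner product $\langle Ax,Ay\rangle_{\mathcal Y}$, $\mathcal Y_1=\operatorname{ran}A$ with the inner product of $\mathcal Y$ (so $A:\mathcal X_h\to\mathcal Y_1$ is an isometric isomorphism), and $\mathcal Z_h=\mathcal X_h\times\mathcal X$. Let $B:\mathcal Y\supset\operatorname{dom}B\to\mathcal X$ be closed, densely defined with $A^*\subset-B$, and $B_{\mathcal Y_1}$ the restriction of $B$ to $\operatorname{dom}B\cap\mathcal Y_1$ viewed as an operator $\mathcal Y_1\to\mathcal X$. Let $\mathcal A$ on $\mathcal Z_h$ be given by $\operatorname{dom}\mathcal A=\{(z_1,z_2)\in\mathcal X_h\times\mathcal X_h: Az_1\in\operatorname{dom}B\}$, $\mathcal A(z_1,z_2)=(z_2,BAz_1)$, and define $\mathcal B_1$ on $\mathcal Y_1\times\mathcal X$ (product inner product) by $\operatorname{dom}\mathcal B_1=\operatorname{dom}B_{\mathcal Y_1}\times\mathcal X_h$, $\mathcal B_1(v,w)=(Aw,\ Bv)$; equivalently $\mathcal B_1=\operatorname{diag}(A,I)\,\mathcal A\,\operatorname{diag}(A^{-1},I)$. Let $\mathcal G_1,\mathcal G_2$ be Hilbert spaces and $\Lambda=(\Lambda_1,\Lambda_2):\operatorname{dom}A\to\mathcal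 G_1\times\mathcal G_2^*$, $\Pi=(\Pi_1,\Pi_2):\operatorname{dom}B\to\mathcal G_1^*\times\mathcal G_2$ surjective linear maps with $-\langle By,x\rangle_{\mathcal X}-\langle y,Ax\rangle_{\mathcal Y}=\langle\Pi_1y,\Lambda_1x\rangle_{\mathcal G_1^*,\mathcal G_1}-\langle\Pi_2y,\Lambda_2x\rangle_{\mathcal G_2,\mathcal G_2^*}$ for all $y\in\operatorname{dom}B$, $x\in\operatorname{dom}A$. Let $\mathcal G=\mathcal G_1\times\mathcal G_2$, $\mathcal G^*=\mathcal G_1^*\times\mathcal G_2^*$, and on $\operatorname{dom}\mathcal A$ let $\Gamma_0(z_1,z_2)=(\Lambda_1z_2,\Pi_2Az_1)$, $\Gamma_1(z_1,z_2)=(-\Pi_1Az_1,\Lambda_2z_2)$. Define on $\operatorname{dom}\mathcal B_1$ $\Xi_0(v,w)=(\Lambda_1w,\ \Pi_2v)\in\mathcal G$, $\Xi_1(v,w)=(-\Pi_1v,\ \Lambda_2w)\in\mathcal G^*$. Then $(\mathcal G,\Xi_0,\Xi_1)$ is a boundary triplet for $\mathcal B_1$, i.e. $(\Xi_0,\Xi_1):\operatorname{dom}\mathcal B_1\to\mathcal G\times\mathcal G^*$ is surjective and $\langle\mathcal B_1f,g\rangle_{\mathcal Y_1\times\mathcal X}+\langle f,\mathcal B_1g\rangle_{\mathcal Y_1\times\mathcal X}=\langle\Xi_1f,\Xi_0g\rangle_{\mathcal G^*,\mathcal G}+\langle\Xi_0f,\Xi_1g\rangle_{\mathcal G,\mathcal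 G^*}$ for all $f,g\in\operatorname{dom}\mathcal B_1$. In particular $\Xi_i=\Gamma_i\operatorname{diag}(A^{-1},I)$ for $i=0,1$.
   Context: All Hilbert spaces are complex; $\mathcal H^*$ denotes the anti-dual of a Hilbert space $\mathcal H$, $\langle\cdot,\cdot\rangle_{\mathcal H^*,\mathcal H}$ the duality pairing and $\langle h,\phi\rangle_{\mathcal H,\mathcal H^*}:=\overline{\langle\phi,h\rangle_{\mathcal H^*,\mathcal H}}$. *)

From HB Require Import structures.
From mathcomp Require Import all_boot all_order all_algebra.
From mathcomp Require Import complex.
From mathcomp Require Import reals.
Set Implicit Arguments. Unset Strict Implicit. Unset Printing Implicit Defensive.
Import Order.TTheory GRing.Theory Num.Theory.
Local Open Scope ring_scope.

Section Defs.
Variable R : realType.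
Local Notation C := (R[i]).

Definition inner_product (V : lmodType C) (ip : V -> V -> C) : Prop :=
  [/\ forall (a : C) (x y z : V), ip (a *: x + y) z = a * ip x z + ip y z,
      forall x y : V, ip y x = (ip x y)^*,
      forall x : V, 0 <= ip x x
    & forall x : V, ip x x = 0 -> x = 0].

Definition hnorm (V : lmodType C) (ip : V -> V -> C) (x : V) : C := sqrtC (ip x x).

Definition cvg_seq (V : lmodType C) (ip : V -> V -> C) (u : nat -> V) (x : V) :=
  forall eps : C, 0 < eps -> exists N : nat, forall n, (N <= n)%N ->
    hnorm ip (u n - x) < eps.

Definition cauchy_seq (V : lmodType C) (ip : V -> V -> C) (u : nat -> V) :=
  forall eps : C, 0 < eps -> exists N : nat, forall m n, (N <= m)%N -> (N <= n)%N ->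
    hnorm ip (u m - u n) < eps.

Definition hilbert (V : lmodType C) (ip : V -> V -> C) : Prop :=
  inner_product ip /\
  forall u : nat -> V, cauchy_seq ip u -> exists x, cvg_seq ip u x.

Definition subspace (V : lmodType C) (D : V -> Prop) : Prop :=
  D 0 /\ forall (a : C) (x y : V), D x -> D y -> D (a *: x + y).

Definition linear_on (V W : lmodType C) (D : V -> Prop) (T : V -> W) : Prop :=
  subspace D /\
  forall (a : C) (x y : V), D x -> D y -> T (a *: x + y) = a *: T x + T y.

Definition linear_on_fun (V W : lmodType C) (D : V -> Prop) (T : V -> W -> C) :=
  subspace D /\
  forall (a : C) (x y : V), D x -> D y ->
    T (a *: x + y) = (fun g => a * T x g + T y g).

Definition closed_op (V W : lmodType C) (ipV : V -> V -> C) (ipW : W -> W -> C)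
    (D : V -> Prop) (T : V -> W) : Prop :=
  forall (u : nat -> V) (x : V) (y : W), (forall n, D (u n)) ->
    cvg_seq ipV u x -> cvg_seq ipW (fun n => T (u n)) y -> D x /\ T x = y.

Definition dense_in (V : lmodType C) (ipV : V -> V -> C) (D : V -> Prop) : Prop :=
  forall x : V, exists u : nat -> V, (forall n, D (u n)) /\ cvg_seq ipV u x.

Definition adjoint_graph (V W : lmodType C) (ipV : V -> V -> C) (ipW : W -> W -> C)
    (D : V -> Prop) (T : V -> W) (y : W) (z : V) : Prop :=
  forall x, D x -> ipW (T x) y = ipV x z.

Definition adjoint_sub_neg (V W : lmodType C) (ipV : V -> V -> C) (ipW : W -> W -> C)
    (D : V -> Prop) (T : V -> W) (DS : W -> Prop) (S : W -> V) : Prop :=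
  forall y z, adjoint_graph ipV ipW D T y z -> DS y /\ S y = - z.

(* the anti-dual G^*: bounded antilinear functionals G -> C;
   the duality pairing <phi, g>_{G^*,G} is phi g *)
Definition antidual (G : lmodType C) (ipG : G -> G -> C) (phi : G -> C) : Prop :=
  (forall (a : C) (x y : G), phi (a *: x + y) = a^* * phi x + phi y) /\
  exists M : C, forall x, `|phi x| <= M * hnorm ipG x.

End Defs.

(* The operators of the lemma (on Y x X, with Y_1 = ran A as a domain condition) *)
Section Ops.
Variables (R : realType) (X Y G1 G2 : lmodType R[i]).
Variables (domA : X -> Prop) (A : X -> Y) (domB : Y -> Prop) (B : Y -> X).
Variables (L1 : X -> G1) (L2 : X -> G2 -> R[i]) (P1 : Y -> G1 -> R[i]) (P2 : Y -> G2).

Definition domB1 (f : Y * X) : Prop :=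
  (domB f.1 /\ exists x, domA x /\ A x = f.1) /\ domA f.2.
Definition B1 (f : Y * X) : Y * X := (A f.2, B f.1).
Definition Xi0 (f : Y * X) : G1 * G2 := (L1 f.2, P2 f.1).
Definition Xi1 (f : Y * X) : (G1 -> R[i]) * (G2 -> R[i]) :=
  (fun g => - P1 f.1 g, L2 f.2).
Definition Gamma0 (z : X * X) : G1 * G2 := (L1 z.2, P2 (A z.1)).
Definition Gamma1 (z : X * X) : (G1 -> R[i]) * (G2 -> R[i]) :=
  (fun g => - P1 (A z.1) g, L2 z.2).
End Ops.

From mathcomp Require Import all_boot all_order all_algebra.
From mathcomp Require Import complex reals.
From mathcomp Require Import ring lra.
From mathcomp Require Import boolp classical_sets.
Set Implicit Arguments. Unset Strict Implicit. Unset Printing Implicit Defensive.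
Import Order.TTheory GRing.Theory Num.Theory.
Local Open Scope complex_scope.
Local Open Scope ring_scope.

(* The Green identity for B1 is the Green identity of (A, B, Lambda, Pi) applied
   to the pairs (v1, w2) and (v2, w1), the second one conjugated.
   For surjectivity, take y in dom B with the prescribed Pi-values.  As A is
   closed and bounded below, ran A is closed, so y = m + y0 with m in ran A and
   y0 orthogonal to ran A.  Then y0 is in the kernel of A^*, which is contained
   in -B, so B y0 = 0, and Green's identity together with the surjectivity of
   Lambda forces Pi y0 = 0.  Hence m lies in dom B and in ran A and has the same
   Pi-values as y.  The orthogonal projection onto ran A is the limit of a
   minimizing sequence for the distance to y, which is Cauchy by the
   parallelogram law. *)

Section ComplexParts.
Variable R : realType.
Implicit Types x y : R[i].

Lemma ReD x y : complex.Re (x + y) = complex.Re x + complex.Re y.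
Proof. by case: x; case: y. Qed.

Lemma ReN x : complex.Re (- x) = - complex.Re x.
Proof. by case: x. Qed.

Lemma ReJ x : complex.Re x^* = complex.Re x.
Proof. by case: x. Qed.

Lemma ReMr (t : R) x : complex.Re (t%:C * x) = t * complex.Re x.
Proof. by case: x => a b /=; rewrite mul0r subr0. Qed.

Lemma Re_conjM x : complex.Re (x^* * x) = complex.Re x ^+ 2 + complex.Im x ^+ 2.
Proof. by case: x => a b /=; rewrite !expr2 mulNr opprK. Qed.

Lemma conjC_realC (t : R) : (t%:C)^* = t%:C :> R[i].
Proof. exact: conjc_real. Qed.

Lemma gt0_realC x : 0 < x -> exists2 e : R, 0 < e & x = e%:C.
Proof. by case: x => a b; rewrite ltcE /= => /andP[/eqP -> a0]; exists a. Qed.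

Lemma ge0_ReE x : 0 <= x -> x = (complex.Re x)%:C.
Proof. by case: x => a b; rewrite lecE /= => /andP[/eqP -> _]. Qed.

Lemma sqrtC_real (t : R) : 0 <= t -> sqrtC t%:C = (Num.sqrt t)%:C.
Proof.
move=> t0; rewrite -[t in t%:C](sqr_sqrtr t0) rmorphXn sqrCK //.
by rewrite lecR sqrtr_ge0.
Qed.

End ComplexParts.

Section InnerProduct.
Variables (R : realType) (V : lmodType R[i]) (ip : V -> V -> R[i]).
Hypothesis hip : inner_product ip.

Lemma conj_ip x y : (ip x y)^* = ip y x.
Proof. by case: hip => _ ipC _ _; rewrite ipC conjCK. Qed.

Lemma ip0l z : ip 0 z = 0.
Proof.
case: hip => ipl _ _ _; have := ipl (-1) 0 0 z.
by rewrite scaler0 addr0 mulN1r addNr.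
Qed.

Lemma ipDl x y z : ip (x + y) z = ip x z + ip y z.
Proof. by case: hip => ipl _ _ _; rewrite -[x in LHS]scale1r ipl mul1r. Qed.

Lemma ipZl a x z : ip (a *: x) z = a * ip x z.
Proof. by case: hip => ipl _ _ _; rewrite -[_ *: _]addr0 ipl ip0l addr0. Qed.

Lemma ipNl x z : ip (- x) z = - ip x z.
Proof. by rewrite -scaleN1r ipZl mulN1r. Qed.

Lemma ipDr x y z : ip z (x + y) = ip z x + ip z y.
Proof. by rewrite -conj_ip ipDl rmorphD /= !conj_ip. Qed.

Lemma ipZr a x z : ip z (a *: x) = a^* * ip z x.
Proof. by rewrite -conj_ip ipZl rmorphM /= !conj_ip. Qed.

Lemma ipNr x z : ip z (- x) = - ip z x.
Proof. by rewrite -conj_ip ipNl rmorphN /= !conj_ip. Qed.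

Lemma ip0r z : ip z 0 = 0.
Proof. by rewrite -conj_ip ip0l rmorph0. Qed.

Definition sqnorm (v : V) : R := complex.Re (ip v v).

Lemma sqnormE v : ip v v = (sqnorm v)%:C.
Proof. by case: hip => _ _ ip_ge0 _; exact: ge0_ReE. Qed.

Lemma sqnorm_ge0 v : 0 <= sqnorm v.
Proof. by case: hip => _ _ ip_ge0 _; rewrite -lecR -sqnormE. Qed.

Lemma sqnorm_eq0 v : sqnorm v = 0 -> v = 0.
Proof. by case: hip => _ _ _ ip_eq0 v0; apply: ip_eq0; rewrite sqnormE v0. Qed.

Lemma sqnormD u v : sqnorm (u + v) = sqnorm u + sqnorm v + 2 * complex.Re (ip u v).
Proof. by rewrite /sqnorm ipDl !ipDr !ReD -(conj_ip u v) ReJ; lra. Qed.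

Lemma sqnormZ a v :
  sqnorm (a *: v) = (complex.Re a ^+ 2 + complex.Im a ^+ 2) * sqnorm v.
Proof.
by rewrite {1}/sqnorm ipZl ipZr mulrA sqnormE mulrC ReMr mulrC (mulrC a) Re_conjM.
Qed.

Lemma sqnormN v : sqnorm (- v) = sqnorm v.
Proof. by rewrite /sqnorm ipNl ipNr opprK. Qed.

Lemma sqnormDZ u v (t : R) :
  sqnorm (u + t%:C *: v) = sqnorm u + t ^+ 2 * sqnorm v + 2 * t * complex.Re (ip u v).
Proof. by rewrite sqnormD sqnormZ ipZr conjC_realC ReMr /= expr0n addr0; lra. Qed.

Lemma sqnorm_double v : sqnorm (v + v) = 4 * sqnorm v.
Proof. by rewrite sqnormD /sqnorm; lra. Qed.

Lemma parallelogram u v :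
  sqnorm (u + v) + sqnorm (u - v) = 2 * sqnorm u + 2 * sqnorm v.
Proof. by rewrite !sqnormD ipNr ReN sqnormN; lra. Qed.

Lemma sqnormB_le u v : sqnorm (u - v) <= 2 * sqnorm u + 2 * sqnorm v.
Proof. by rewrite -parallelogram lerDr sqnorm_ge0. Qed.

Lemma sqnormD_le (t : R) u v : 0 < t ->
  t * sqnorm (u + v) <= (1 + t) * (t * sqnorm u + sqnorm v).
Proof.
move=> t0; have := sqnorm_ge0 (v + (- t)%:C *: u).
rewrite sqnormDZ sqnormD -(conj_ip u v) ReJ; nra.
Qed.

Lemma hnormE v : hnorm ip v = (Num.sqrt (sqnorm v))%:C.
Proof. by rewrite /hnorm sqnormE sqrtC_real // sqnorm_ge0. Qed.

Lemma hnorm_ltE v (e : R) : 0 < e -> (hnorm ip v < e%:C) = (sqnorm v < e ^+ 2).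
Proof.
move=> e0; rewrite hnormE ltcR -{1}(gtr0_norm e0) -sqrtr_sqr.
by rewrite ltr_sqrt // exprn_gt0.
Qed.

Lemma Re_ip_le u v : complex.Re (ip u v) ^+ 2 <= sqnorm u * sqnorm v.
Proof.
have [v0|v0] := eqVneq (sqnorm v) 0.
  by rewrite v0 (sqnorm_eq0 v0) ip0r mulr0 expr0n.
have qv0 : 0 < sqnorm v by rewrite lt_def v0 sqnorm_ge0.
set r := complex.Re (ip u v); set t := - r / sqnorm v.
have rt : r = - t * sqnorm v by rewrite /t !mulNr opprK mulfVK.
have := sqnorm_ge0 (u + t%:C *: v); rewrite sqnormDZ -/r.
have := sqnorm_ge0 u; rewrite rt; nra.
Qed.

Lemma normC_ip_le u v : `|ip u v| <= hnorm ip u * hnorm ip v.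
Proof.
rewrite !hnormE normc_def -rmorphM lecR -sqrtrM ?sqnorm_ge0 //.
rewrite ler_sqrt ?mulr_ge0 ?sqnorm_ge0 //.
(* Real Cauchy-Schwarz for w^* u and v, whose inner product |w|^2 is real. *)
set w := ip u v; have := Re_ip_le (w^* *: u) v.
rewrite ipZl sqnormZ Re_conjM.
have -> : complex.Re w^* ^+ 2 + complex.Im w^* ^+ 2
          = complex.Re w ^+ 2 + complex.Im w ^+ 2 by case: (w) => a b /=; rewrite sqrrN.
move: (complex.Re w ^+ 2 + complex.Im w ^+ 2) (sqnorm_ge0 u) (sqnorm_ge0 v) => s u0 v0.
have [->|s0] := eqVneq s 0; first by rewrite mulr_ge0.
rewrite expr2 -mulrA; nra.
Qed.

Lemma Re_ip_eq0_of_min w z :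
  (forall t : R, sqnorm w <= sqnorm (w + t%:C *: z)) -> complex.Re (ip w z) = 0.
Proof.
move=> wmin; set r := complex.Re (ip w z).
have s0 : 0 < sqnorm z + 1 by rewrite ltr_wpDl ?sqnorm_ge0.
have rt : r = - (- r / (sqnorm z + 1)) * (sqnorm z + 1).
  by rewrite !mulNr opprK mulfVK ?gt_eqF.
have := wmin (- r / (sqnorm z + 1)); rewrite sqnormDZ -/r.
move: (- r / _) rt => t rt tmin; have := sqnorm_ge0 z; nra.
Qed.

Lemma ip_eq0_of_min w z :
  (forall a : R[i], sqnorm w <= sqnorm (w + a *: z)) -> ip w z = 0.
Proof.
(* The real part of <w, 'i z> is the imaginary part of <w, z>. *)
move=> wmin; have re0 := Re_ip_eq0_of_min (fun t => wmin t%:C).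
have : complex.Re (ip w ('i *: z)) = 0.
  by apply: Re_ip_eq0_of_min => t; rewrite scalerA; exact: wmin.
rewrite ipZr; move: re0; case: (ip w z) => a b /= ->.
by rewrite mul0r mulN1r sub0r opprK => ->.
Qed.

Lemma antidual_ip h : antidual ip (ip h).
Proof.
split=> [a x z|]; first by rewrite ipDr ipZr.
by exists (hnorm ip h) => x; exact: normC_ip_le.
Qed.

Lemma cvg_seq_sqnorm u x : cvg_seq ip u x <->
  forall e : R, 0 < e -> exists N, forall n, (N <= n)%N -> sqnorm (u n - x) < e.
Proof.
split=> [ux e e0 | ux _ /gt0_realC[e e0 ->]].
- have [|N uN] := ux (Num.sqrt e)%:C; first by rewrite ltcR sqrtr_gt0.
  by exists N => n /uN; rewrite hnorm_ltE ?sqrtr_gt0 // sqr_sqrtr // ltW.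
- have [N uN] := ux (e ^+ 2) (exprn_gt0 2 e0).
  by exists N => n /uN; rewrite hnorm_ltE.
Qed.

Lemma cauchy_seq_sqnorm u : cauchy_seq ip u <->
  forall e : R, 0 < e -> exists N, forall m n, (N <= m)%N -> (N <= n)%N ->
    sqnorm (u m - u n) < e.
Proof.
split=> [uc e e0 | uc _ /gt0_realC[e e0 ->]].
- have [|N uN] := uc (Num.sqrt e)%:C; first by rewrite ltcR sqrtr_gt0.
  exists N => m n Nm Nn; move: (uN m n Nm Nn).
  by rewrite hnorm_ltE ?sqrtr_gt0 // sqr_sqrtr // ltW.
- have [N uN] := uc (e ^+ 2) (exprn_gt0 2 e0).
  by exists N => m n Nm Nn; rewrite hnorm_ltE // uN.
Qed.

End InnerProduct.

Lemma sqnorm_le_of_hnorm (R : realType) (U V : lmodType R[i])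
    (ipU : U -> U -> R[i]) (ipV : V -> V -> R[i]) (c : R) u v :
  inner_product ipU -> inner_product ipV -> 0 <= c ->
  c%:C * hnorm ipU u <= hnorm ipV v -> c ^+ 2 * sqnorm ipU u <= sqnorm ipV v.
Proof.
move=> hU hV c0; rewrite !hnormE // -rmorphM lecR.
rewrite -(ler_pXn2r (n := 2)) ?nnegrE ?mulr_ge0 ?sqrtr_ge0 //.
by rewrite exprMn !sqr_sqrtr ?sqnorm_ge0.
Qed.

Lemma antidual0 (R : realType) (G : lmodType R[i]) (ipG : G -> G -> R[i]) :
  antidual ipG (fun=> 0).
Proof.
split=> [a x y|]; first by rewrite mulr0 addr0.
by exists 0 => x; rewrite normr0 mul0r.
Qed.

Lemma antidualN (R : realType) (G : lmodType R[i]) (ipG : G -> G -> R[i]) phi :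
  antidual ipG phi -> antidual ipG (fun g => - phi g).
Proof.
case=> phi_lin [M phiM]; split=> [a x y|]; first by rewrite phi_lin opprD mulrN.
by exists M => x; rewrite normrN.
Qed.

Section Subspace.
Variables (R : realType) (V : lmodType R[i]) (M : V -> Prop).
Hypothesis hM : subspace M.

Lemma subspace0 : M 0. Proof. by case: hM. Qed.

Lemma subspaceZ a x : M x -> M (a *: x).
Proof. by move=> Mx; rewrite -[_ *: _]addr0; apply: hM.2 => //; exact: subspace0. Qed.

Lemma subspaceD x y : M x -> M y -> M (x + y).
Proof. by case: hM => _ Mlin Mx My; rewrite -[x]scale1r; apply: Mlin. Qed.

Lemma subspaceB x y : M x -> M y -> M (x - y).
Proof. by move=> Mx My; rewrite -scaleN1r addrC; case: hM => _; apply. Qed.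

End Subspace.

Section LinearOn.
Variables (R : realType) (V W : lmodType R[i]) (D : V -> Prop).

Lemma linear_onB (T : V -> W) x y : linear_on D T -> D x -> D y ->
  D (x - y) /\ T (x - y) = T x - T y.
Proof.
case=> hD Tlin Dx Dy; split; first exact: subspaceB.
by rewrite -scaleN1r addrC Tlin // scaleN1r addrC.
Qed.

Lemma linear_on_funB (T : V -> W -> R[i]) x y : linear_on_fun D T -> D x -> D y ->
  T (x - y) = fun g => T x g - T y g.
Proof.
case=> _ Tlin Dx Dy; rewrite -scaleN1r addrC Tlin //.
by apply: funext => g; rewrite mulN1r addrC.
Qed.

Definition range_on (T : V -> W) (w : W) : Prop := exists x, D x /\ T x = w.

Lemma range_on_subspace (T : V -> W) : linear_on D T -> subspace (range_on T).
Proof.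
move=> Tlin; have [D0 T0] := linear_onB Tlin (subspace0 Tlin.1) (subspace0 Tlin.1).
rewrite !subrr in D0 T0; split; first by exists 0.
move=> a _ _ [x [Dx <-]] [y [Dy <-]]; exists (a *: x + y).
by case: Tlin => hD Tlin; split; [case: hD => _; apply | exact: Tlin].
Qed.

End LinearOn.

Lemma invSn_lt_eventually (R : realType) (e : R) : 0 < e ->
  exists N, forall n, (N <= n)%N -> n.+1%:R^-1 < e.
Proof.
move=> e0; exists (Num.truncn e^-1) => n Nn.
rewrite -(invrK e) ltf_pV2 ?posrE ?invr_gt0 //.
by apply: lt_le_trans (truncnS_gt _) _; rewrite ler_nat ltnS.
Qed.

Section Projection.
Local Open Scope classical_set_scope.
Variables (R : realType) (V : lmodType R[i]) (ip : V -> V -> R[i]).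
Hypothesis hV : hilbert ip.
Let hip : inner_product ip := hV.1.
Variable M : V -> Prop.
Hypotheses (hM : subspace M)
  (M_closed : forall u x, (forall n, M (u n)) -> cvg_seq ip u x -> M x).
Variable y : V.

Let dists : set R := [set sqnorm ip (y - z) | z in M].
Let dist2 := inf dists.

Let dists_neq0 : dists !=set0.
Proof. by exists (sqnorm ip (y - 0)), 0 => //; exact: subspace0. Qed.

Let dists_ge0 : lbound dists 0.
Proof. by move=> _ [z _ <-]; exact: sqnorm_ge0. Qed.

Let dist2_le z : M z -> dist2 <= sqnorm ip (y - z).
Proof. by move=> Mz; apply: ge_inf; [exists 0; exact: dists_ge0 | exists z]. Qed.

Let dist2_ge0 : 0 <= dist2.
Proof. exact: lb_le_inf dists_neq0 dists_ge0. Qed.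

Let minimizing (ms : nat -> V) :=
  forall n, M (ms n) /\ sqnorm ip (y - ms n) < dist2 + n.+1%:R^-1.

Let minimizing_exists : exists ms, minimizing ms.
Proof.
have near n : exists z, M z /\ sqnorm ip (y - z) < dist2 + n.+1%:R^-1.
  have : dist2 < dist2 + n.+1%:R^-1 by rewrite ltrDl invr_gt0 ltr0Sn.
  by case/(inf_lt dists_neq0) => _ [z Mz <-]; exists z.
by have [ms] := choice near; exists ms.
Qed.

Let sqnorm_sub_le z1 z2 : M z1 -> M z2 ->
  sqnorm ip (z1 - z2) <= 2 * sqnorm ip (y - z1) + 2 * sqnorm ip (y - z2) - 4 * dist2.
Proof.
(* Parallelogram law for y - z1 and y - z2, whose half-sum is y minus the
   midpoint h of z1 and z2, a point of M. *)
move=> Mz1 Mz2; set h := 2^-1 *: (z1 + z2).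
have hh : h + h = z1 + z2.
  by rewrite -scalerDl (_ : 2^-1 + 2^-1 = 1) ?scale1r //; field.
have dh := dist2_le (subspaceZ hM 2^-1 (subspaceD hM Mz1 Mz2)); rewrite -/h in dh.
have sum_eq : (y - z1) + (y - z2) = (y - h) + (y - h).
  by rewrite addrACA [RHS]addrACA -!opprD hh.
have dif_eq : (y - z1) - (y - z2) = - (z1 - z2).
  by rewrite !opprB addrC addrA subrK.
have := parallelogram hip (y - z1) (y - z2).
rewrite sum_eq dif_eq sqnorm_double // sqnormN //; lra.
Qed.

Let minimizing_cauchy ms : minimizing ms -> cauchy_seq ip ms.
Proof.
move=> ms_min; apply/cauchy_seq_sqnorm => // e e0.
have [N Ne] := invSn_lt_eventually (divr_gt0 e0 (ltr0n R 4)).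
exists N => m n Nm Nn; have [Mm ym] := ms_min m; have [Mn yn] := ms_min n.
have : e / 4 * 4 = e by rewrite mulfVK ?pnatr_eq0.
move: ym yn (Ne _ Nm) (Ne _ Nn) (sqnorm_sub_le Mm Mn).
move: (e / 4) (m.+1%:R^-1) (n.+1%:R^-1) => f a b; lra.
Qed.

Let minimizing_limit ms m : minimizing ms -> cvg_seq ip ms m ->
  sqnorm ip (y - m) <= dist2.
Proof.
move=> ms_min /(cvg_seq_sqnorm hip) ms_m.
have near t : 0 < t -> t <= 1 -> sqnorm ip (y - m) <= dist2 + t * (dist2 + 4).
  move=> t0 t1; have [N1 N1t] := invSn_lt_eventually t0.
  have [N2 N2t] := ms_m _ (exprn_gt0 2 t0).
  pose n := maxn N1 N2; have [_ yn] := ms_min n.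
  have ynt : sqnorm ip (y - ms n) < dist2 + t.
    by move: yn (N1t n (leq_maxl _ _)); move: (n.+1%:R^-1) => a; lra.
  have nm : sqnorm ip (ms n - m) < t ^+ 2 := N2t n (leq_maxr _ _).
  have : t * sqnorm ip (y - m) <= t * ((1 + t) * (dist2 + 2 * t)).
    rewrite -(subrK (ms n) y) -addrA; apply: le_trans (sqnormD_le hip _ _ t0) _.
    by rewrite mulrCA ler_wpM2l ?addr_ge0 ?ltW //; nra.
  by rewrite ler_pM2l //; nra.
apply/ler_addgt0Pr => e e0.
have de0 : 0 < dist2 + 4 + e by have := dist2_ge0; lra.
have t0 : 0 < e / (dist2 + 4 + e) by rewrite divr_gt0.
have t1 : e / (dist2 + 4 + e) <= 1.
  by rewrite ler_pdivrMr // mul1r; have := dist2_ge0; lra.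
have : e / (dist2 + 4 + e) * (dist2 + 4 + e) = e by rewrite mulfVK ?gt_eqF.
have := near _ t0 t1; move: t0 t1; move: (e / _) => t; nra.
Qed.

Theorem orthogonal_projection : exists2 m, M m & forall z, M z -> ip (y - m) z = 0.
Proof.
have [ms ms_min] := minimizing_exists.
have [m ms_m] := hV.2 _ (minimizing_cauchy ms_min).
have Mm : M m := M_closed (fun n => (ms_min n).1) ms_m.
exists m => // z Mz; apply: ip_eq0_of_min => // a.
apply: le_trans (minimizing_limit ms_min ms_m) _.
have -> : y - m + a *: z = y - (m - a *: z) by rewrite opprB addrCA addrC.
by apply: dist2_le; apply: subspaceB => //; exact: subspaceZ.
Qed.

End Projection.

Section ClosedRange.
Variables (R : realType) (X Y : lmodType R[i]).
Variables (ipX : X -> X -> R[i]) (ipY : Y -> Y -> R[i]).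
Hypotheses (hX : hilbert ipX) (hY : inner_product ipY).
Variables (domA : X -> Prop) (A : X -> Y).
Hypotheses (A_lin : linear_on domA A) (A_closed : closed_op ipX ipY domA A).
Variable c : R.
Hypotheses (c_gt0 : 0 < c)
  (A_below : forall x, domA x -> c ^+ 2 * sqnorm ipX x <= sqnorm ipY (A x)).

Lemma range_on_closed u v : (forall n, range_on domA A (u n)) ->
  cvg_seq ipY u v -> range_on domA A v.
Proof.
move=> uA uv; have [xs xsA] := choice uA.
have Axs : (fun n => A (xs n)) = u by apply: funext => n; case: (xsA n).
have xs_cauchy : cauchy_seq ipX xs.
  apply/(cauchy_seq_sqnorm hX.1) => e e0.
  have c2 : 0 < c ^+ 2 by rewrite exprn_gt0.
  have [N uN] := (cvg_seq_sqnorm hY u v).1 uv _ (divr_gt0 (mulr_gt0 c2 e0) (ltr0n R 4)).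
  exists N => m n Nm Nn; have [dm Am] := xsA m; have [dn An] := xsA n.
  have [dmn Amn] := linear_onB A_lin dm dn.
  rewrite -(ltr_pM2l c2); have := A_below dmn; rewrite Amn Am An.
  have := sqnormB_le hY (u m - v) (u n - v); rewrite opprB addrA subrK.
  have : c ^+ 2 * e / 4 * 4 = c ^+ 2 * e by rewrite mulfVK ?pnatr_eq0.
  move: (uN m Nm) (uN n Nn); move: (c ^+ 2 * e / 4) => f.
  lra.
have [x xs_x] := hX.2 _ xs_cauchy.
have Axs_v : cvg_seq ipY (fun n => A (xs n)) v by rewrite Axs.
by exists x; exact: A_closed (fun n => (xsA n).1) xs_x Axs_v.
Qed.

End ClosedRange.

Section BoundaryTriplet.
Variables (R : realType) (X Y G1 G2 : lmodType R[i]).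
Variables (ipX : X -> X -> R[i]) (ipY : Y -> Y -> R[i]) (ipG2 : G2 -> G2 -> R[i]).
Hypotheses (hX : inner_product ipX) (hY : inner_product ipY)
  (hG2 : inner_product ipG2).
Variables (domA : X -> Prop) (A : X -> Y) (domB : Y -> Prop) (B : Y -> X).
Variables (L1 : X -> G1) (L2 : X -> G2 -> R[i]) (P1 : Y -> G1 -> R[i]) (P2 : Y -> G2).
Hypothesis green : forall y x, domB y -> domA x ->
  - ipX (B y) x - ipY y (A x) = P1 y (L1 x) - (L2 x (P2 y))^*.

Lemma green_B1 f g : domB1 domA A domB f -> domB1 domA A domB g ->
  (ipY (B1 A B f).1 g.1 + ipX (B1 A B f).2 g.2)
  + (ipY f.1 (B1 A B g).1 + ipX f.2 (B1 A B g).2)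
  = ((Xi1 L2 P1 f).1 (Xi0 L1 P2 g).1 + (Xi1 L2 P1 f).2 (Xi0 L1 P2 g).2)
    + ((Xi1 L2 P1 g).1 (Xi0 L1 P2 f).1 + (Xi1 L2 P1 g).2 (Xi0 L1 P2 f).2)^*.
Proof.
case: f g => [v1 w1] [v2 w2] [[dv1 _] dw1] [[dv2 _] dw2] /=.
have green12 := green dv1 dw2.
have := congr1 Num.conj (green dv2 dw1).
rewrite !rmorphB /= rmorphN /= conjCK (conj_ip hX) (conj_ip hY) => green21.
have -> : ipY (A w1) v2 + ipX (B v1) w2 + (ipY v1 (A w2) + ipX w1 (B v2))
        = - (- ipX (B v1) w2 - ipY v1 (A w2)) - (- ipX w1 (B v2) - ipY (A w1) v2).
  by ring.
by rewrite green12 green21 rmorphD rmorphN /=; ring.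
Qed.

Hypothesis A_adj : adjoint_sub_neg ipX ipY domA A domB B.
Hypothesis L_onto : forall (g1 : G1) (phi2 : G2 -> R[i]), antidual ipG2 phi2 ->
  exists x, domA x /\ L1 x = g1 /\ L2 x = phi2.

Section OrthogonalToRange.
Variable y0 : Y.
Hypothesis y0_orth : forall x, domA x -> ipY y0 (A x) = 0.

Lemma orth_range_kernel : domB y0 /\ B y0 = 0.
Proof.
have [] := A_adj (y := y0) (z := 0); last by rewrite oppr0.
by move=> x dx; rewrite ip0r // -conj_ip // y0_orth // conjC0.
Qed.

Let green_orth x : domA x -> P1 y0 (L1 x) = (L2 x (P2 y0))^*.
Proof.
have [dy0 By0] := orth_range_kernel.
move=> dx; apply/eqP; rewrite -subr_eq0 -green //.
by rewrite By0 ip0l // y0_orth // oppr0 addr0.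
Qed.

Lemma P1_orth_range : P1 y0 = fun=> 0.
Proof.
apply: funext => g; have [x [dx [<- L2x]]] := L_onto g (antidual0 ipG2).
by rewrite green_orth // L2x conjC0.
Qed.

Lemma P2_orth_range : P2 y0 = 0.
Proof.
have [x [dx [L1x L2x]]] := L_onto 0 (antidual_ip hG2 (P2 y0)).
have := green_orth dx; rewrite L1x L2x P1_orth_range => /esym/eqP.
by rewrite conjC_eq0 => /eqP; case: hG2 => _ _ _; apply.
Qed.

End OrthogonalToRange.

Variable ipG1 : G1 -> G1 -> R[i].
Hypotheses (Y_complete : forall u, cauchy_seq ipY u -> exists y, cvg_seq ipY u y)
  (A_lin : linear_on domA A)
  (range_closed : forall u v, (forall n, range_on domA A (u n)) ->
     cvg_seq ipY u v -> range_on domA A v)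
  (B_lin : linear_on domB B) (P1_lin : linear_on_fun domB P1)
  (P2_lin : linear_on domB P2)
  (P_onto : forall (phi1 : G1 -> R[i]) (g2 : G2), antidual ipG1 phi1 ->
     exists y, domB y /\ P1 y = phi1 /\ P2 y = g2).

Lemma Xi_onto g1 g2 phi1 phi2 : antidual ipG1 phi1 -> antidual ipG2 phi2 ->
  exists f, domB1 domA A domB f /\ Xi0 L1 P2 f = (g1, g2)
                               /\ Xi1 L2 P1 f = (phi1, phi2).
Proof.
move=> phi1_ad phi2_ad.
have [y [dy [P1y P2y]]] := P_onto g2 (antidualN phi1_ad).
have [m ran_m m_orth] :=
  orthogonal_projection (conj hY Y_complete) (range_on_subspace A_lin) range_closed y.
have y0_orth x : domA x -> ipY (y - m) (A x) = 0.
  by move=> dx; apply: m_orth; exists x.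
have [dy0 _] := orth_range_kernel y0_orth.
have my : m = y - (y - m) by rewrite opprB addrC subrK.
have [dm _] := linear_onB B_lin dy dy0; rewrite -my in dm.
have P1m : P1 m = P1 y.
  rewrite my (linear_on_funB P1_lin dy dy0) (P1_orth_range y0_orth).
  by apply: funext => g; rewrite subr0.
have P2m : P2 m = P2 y.
  by rewrite my (linear_onB P2_lin dy dy0).2 (P2_orth_range y0_orth) subr0.
have [x [dx [L1x L2x]]] := L_onto g1 phi2_ad.
exists (m, x); split; first exact: (conj (conj dm ran_m) dx).
rewrite /Xi0 /Xi1 /= L1x L2x P1m P2m P1y P2y; split => //.
by congr pair; apply: funext => g; rewrite opprK.
Qed.

End BoundaryTriplet.

Theorem lemma3p4 (R : realType) (X Y G1 G2 : lmodType R[i])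
  (ipX : X -> X -> R[i]) (ipY : Y -> Y -> R[i])
  (ipG1 : G1 -> G1 -> R[i]) (ipG2 : G2 -> G2 -> R[i])
  (hX : hilbert ipX) (hY : hilbert ipY) (hG1 : hilbert ipG1) (hG2 : hilbert ipG2)
  (domA : X -> Prop) (A : X -> Y)
  (hA_lin : linear_on domA A) (hA_closed : closed_op ipX ipY domA A)
  (hA_dense : dense_in ipX domA)
  (c : R[i]) (hc : 0 < c)
  (hA_below : forall x, domA x -> c * hnorm ipX x <= hnorm ipY (A x))
  (domB : Y -> Prop) (B : Y -> X)
  (hB_lin : linear_on domB B) (hB_closed : closed_op ipY ipX domB B)
  (hB_dense : dense_in ipY domB)
  (hAB : adjoint_sub_neg ipX ipY domA A domB B)
  (L1 : X -> G1) (L2 : X -> G2 -> R[i]) (P1 : Y -> G1 -> R[i]) (P2 : Y -> G2)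
  (hL1 : linear_on domA L1) (hL2 : linear_on_fun domA L2)
  (hL2d : forall x, domA x -> antidual ipG2 (L2 x))
  (hL_surj : forall (g1 : G1) (phi2 : G2 -> R[i]), antidual ipG2 phi2 ->
     exists x, domA x /\ L1 x = g1 /\ L2 x = phi2)
  (hP1 : linear_on_fun domB P1) (hP2 : linear_on domB P2)
  (hP1d : forall y, domB y -> antidual ipG1 (P1 y))
  (hP_surj : forall (phi1 : G1 -> R[i]) (g2 : G2), antidual ipG1 phi1 ->
     exists y, domB y /\ P1 y = phi1 /\ P2 y = g2)
  (hGreen : forall y x, domB y -> domA x ->
     - ipX (B y) x - ipY y (A x) = P1 y (L1 x) - (L2 x (P2 y))^*) :
  (* (Xi0, Xi1) : dom B1 -> G x G^* is surjective *)
  (forall (g1 : G1) (g2 : G2) (phi1 : G1 -> R[i]) (phi2 : G2 -> R[i]),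
     antidual ipG1 phi1 -> antidual ipG2 phi2 ->
     exists f, domB1 domA A domB f /\ Xi0 L1 P2 f = (g1, g2)
                                 /\ Xi1 L2 P1 f = (phi1, phi2))
  /\
  (* abstract Green identity on Y_1 x X with the product inner product *)
  (forall f g, domB1 domA A domB f -> domB1 domA A domB g ->
     (ipY (B1 A B f).1 g.1 + ipX (B1 A B f).2 g.2)
     + (ipY f.1 (B1 A B g).1 + ipX f.2 (B1 A B g).2)
     = ((Xi1 L2 P1 f).1 (Xi0 L1 P2 g).1 + (Xi1 L2 P1 f).2 (Xi0 L1 P2 g).2)
       + ((Xi1 L2 P1 g).1 (Xi0 L1 P2 f).1 + (Xi1 L2 P1 g).2 (Xi0 L1 P2 f).2)^*)
  /\
  (* Xi_i = Gamma_i diag(A^{-1}, I) *)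
  (forall v w z1, domB1 domA A domB (v, w) -> domA z1 -> A z1 = v ->
     Xi0 L1 P2 (v, w) = Gamma0 A L1 P2 (z1, w) /\
     Xi1 L2 P1 (v, w) = Gamma1 A L2 P1 (z1, w)).
Proof.
have [cr cr0 c_cr] := gt0_realC hc.
have A_below x : domA x -> cr ^+ 2 * sqnorm ipX x <= sqnorm ipY (A x).
  by move=> dx; apply: sqnorm_le_of_hnorm hX.1 hY.1 (ltW cr0) _; rewrite -c_cr hA_below.
have ran_closed := range_on_closed hX hY.1 hA_lin hA_closed cr0 A_below.
split; [|split].
- exact: (Xi_onto hX.1 hY.1 hG2.1 hGreen hAB hL_surj hY.2 hA_lin ran_closed
            hB_lin hP1 hP2 hP_surj).
- exact: (green_B1 hX.1 hY.1 hGreen).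
- by move=> v w z1 _ _ <-.
Qed.
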